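(* Let $\mathbb{M}$ be a Zariski-like structure, and suppose $a=(a_0,\dots,a_{n-1})$ and $b=(b_0,\dots,b_{n-1})$ are tuples from $\mathbb{M}$ such that $a\to b$ is a specialization, $a_0\neq a_1$ and $b_0=b_1$. Then there is some $c=(c_0,\dots,c_{n-1})$ such that $a\to c\to b$, $\mathrm{rk}(a\to c)\le1$ and $c_0=c_1$.
   Context: $\mathbb{M}$ is a quasiminimal pregeometry structure (countable language; pregeometry cl determined by quantifier-free types; infinite-dimensional; countable closures of finite sets; unique generic types over countable closed sets; $\aleph_0$-homogeneity over countable closed sets and $\emptyset$) viewed as a monster model. $\dim$ is w.r.t. bcl (= cl), $\mathrm{bcl}(A)$ being the set of elements with fewer than $|\mathbb{M}|$ images under $\mathrm{Aut}(\mathbb{M}/A)$; $A\downarrow_B C$ iff $\dim(a/BC)=\dim(a/B)$ for finite $a$ from $A$; a tuple is generic in a set if its dimension is maximal there; Galois type $t^g(b/A)$ is the orbit under $\mathrm{Aut}(\mathbb{M}/A)$; Galois definable over $A$ = invariant under $\mathrm{Aut}(\mathbb{M}/A)$. Given a collection $\mathcal{C}$ of subsets of the powers of $\mathbb{M}$, a map $a_i\mapsto b_i$ (written $a\to b$) is a specialization if for every $C\in\mathcal{C}$ and $a_{i_1},\dots,a_{i_k}$, $(a_{i_1},\dots,a_{i_k})\in C$ implies $(b_{i_1},\dots,b_{i_k})\in C$; $\mathrm{rk}(a\to b)=\dim(a)-\dim(b)$ for finite tuples. Strongly regular: isomorphisms (Galois-type preserving maps), specializations $a\to a'$ with $a$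 generic over $\emptyset$, and $aa'\to bb'$ with $a\downarrow a'$ and $a\to b$, $a'\to b'$ strongly regular. Strongly good: strongly regular ones, and $(a_1,a_2,a_3)\to(a_1',a_2',a_3')$ whenever $(a_1,a_2)\to(a_1',a_2')$ is strongly good, $a_1\to a_1'$ is an isomorphism and $a_3\in\mathrm{cl}(a_1)$. $\mathbb{M}$ is Zariski-like if there is a countable collection $\mathcal{C}$ of sets $C\subseteq\mathbb{M}^n$ (irreducible sets) with (specializations w.r.t. $\mathcal{C}$): (1) each $C$ Galois definable over $\emptyset$; (2) every tuple is generic in some $C\in\mathcal{C}$; (3) generic elements of $C$ have the same Galois type over $\emptyset$; (4) if $a\in C$ generic and $a\in D\in\mathcal{C}$ then $C\subseteq D$; (5) if $(a,b)\in C_1$ generic, $a$ generic in $C_2$, $(a',b')\in C_1$ then $a'\in C_2$; (6) closed under coordinate permutations; (7) if $a\to a'$ is strongly good of rank $\le1$, specializations $ab\to a'b'$, $ac\to a'c'$ amalgamate: some $b^*\downarrow_a c$ with $t^g(b^*/a)=t^g(b/a)$ and $ab^*c\to a'b'c'$; (8) if $(a_i)_{i\in I}$ is independent and indiscernible over $b$, $(a_i')$ indiscernible over $b'$, $a_ib\to a_i'b'$ for all $i$, and $b\to b'$ strongly good of rank $\le1$, then $(ba_i)_{i\in I}\to(b'a_i')_{i\in I}$ (indiscernible: every permutation extends to an automorphism fixing the base); (9) if $(a_i)_{i<\kappa}\to(b_i)_{i<\kappa}$, $a_0\ne a_1$, $b_0=b_1$, and $S\subseteq\mathcal{P}_{<\omega}(\kappa)$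 is unbounded and directed with $0,1\in X$ for all $X\in S$ and such that for $X\subseteq Y$ in $S$ and every $(c_i)_{i\in Y}$ with $c_0=c_1$, $(a_i)_Y\to(c_i)_Y\to(b_i)_Y$ and $\mathrm{rk}((a_i)_Y\to(c_i)_Y)\le1$ one has $\mathrm{rk}((a_i)_X\to(c_i)_X)\le1$, then there are $(c_i)_{i<\kappa}$ with $(a_i)\to(c_i)\to(b_i)$, $c_0=c_1$ and $\mathrm{rk}((a_i)_X\to(c_i)_X)\le1$ for all $X\in S$. *)

From HB Require Import structures.
From mathcomp Require Import all_boot.
From Stdlib Require List.
From Stdlib Require Import ClassicalEpsilon.

Set Implicit Arguments.
Unset Strict Implicit.
Unset Printing Implicit Defensive.

Record signature := Signature {
  fsym : Type;
  rsym : Type;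
  far : fsym -> nat;
  rar : rsym -> nat }.

Record structure (L : signature) := Structure {
  dom :> Type;
  fint : forall f : fsym L, ('I_(far f) -> dom) -> dom;
  rint : forall r : rsym L, ('I_(rar r) -> dom) -> Prop }.

Definition countableT (T : Type) : Prop := exists f : T -> nat, injective f.

Definition countable_set (T : Type) (A : T -> Prop) : Prop :=
  exists f : T -> nat, forall x y, A x -> A y -> f x = f y -> x = y.

Definition subset (T : Type) (A B : T -> Prop) : Prop := forall x, A x -> B x.

Definition range (I T : Type) (a : I -> T) : T -> Prop := fun x => exists i, a i = x.

Definition emptyset (T : Type) : T -> Prop := fun _ => False.

Definition setU (T : Type) (A B : T -> Prop) : T -> Prop := fun x => A x \/ B x.

Definition inlist (T : Type) (s : seq T) : T -> Prop := fun x => List.In x s.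

Definition catf (I J T : Type) (a : I -> T) (b : J -> T) : I + J -> T :=
  fun k => match k with inl i => a i | inr j => b j end.

Definition extf (I T : Type) (a : I -> T) (x : T) : option I -> T :=
  fun k => match k with Some i => a i | None => x end.

Definition tup (I : finType) (T : Type) (a : I -> T) : seq T := [seq a i | i <- enum I].

Section Structures.
Variable L : signature.
Variable M : structure L.

Inductive term (V : Type) : Type :=
| tvar : V -> term V
| tapp : forall f : fsym L, ('I_(far f) -> term V) -> term V.

Fixpoint teval (V : Type) (x : V -> M) (t : term V) : M :=
  match t with
  | tvar v => x v
  | tapp f ts => @fint L M f (fun i => teval x (ts i))
  end.

Inductive qf (V : Type) : Type :=
| qeq : term V -> term V -> qf V
| qrel : forall r : rsym L, ('I_(rar r) -> term V) -> qf V
| qneg : qf V -> qf V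
| qand : qf V -> qf V -> qf V.

Fixpoint qholds (V : Type) (x : V -> M) (phi : qf V) : Prop :=
  match phi with
  | qeq t1 t2 => teval x t1 = teval x t2
  | qrel r ts => @rint L M r (fun i => teval x (ts i))
  | qneg psi => ~ qholds x psi
  | qand psi chi => qholds x psi /\ qholds x chi
  end.

Definition qftp_eq (V : Type) (x y : V -> M) : Prop :=
  forall phi : qf V, qholds x phi <-> qholds y phi.

Definition is_aut (s : M -> M) : Prop :=
  [/\ bijective s,
      forall f (xs : 'I_(far f) -> M), s (@fint L M f xs) = @fint L M f (s \o xs)
    & forall r (xs : 'I_(rar r) -> M), @rint L M r xs <-> @rint L M r (s \o xs)].

Definition aut_over (A : M -> Prop) (s : M -> M) : Prop :=
  is_aut s /\ forall x, A x -> s x = x.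

Definition gtp_eq (I : Type) (A : M -> Prop) (b b' : I -> M) : Prop :=
  exists s, aut_over A s /\ forall i, s (b i) = b' i.

Definition card_lt_M (X : M -> Prop) : Prop :=
  ~ exists g : M -> M, injective g /\ forall m, X (g m).

Definition bcl (A : M -> Prop) : M -> Prop :=
  fun x => card_lt_M (fun y => exists s, aut_over A s /\ s x = y).

Definition basis (B A : M -> Prop) (s : seq M) : Prop :=
  [/\ List.NoDup s,
      forall y, List.In y s -> A y,
      forall y, List.In y s -> ~ bcl (fun z => B z \/ (List.In z s /\ z <> y)) y
    & forall x, A x -> bcl (fun z => B z \/ List.In z s) x].

(* dim(A/B), for A finite *)
Definition dimS (A B : M -> Prop) : nat :=
  epsilon (inhabits 0) (fun k => exists s, basis B A s /\ size s = k).

Definition dimF (I : Type) (a : I -> M) : nat := dimS (range a) (@emptyset M).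
Definition dimL (l : seq M) : nat := dimS (inlist l) (@emptyset M).

Definition rk (I : Type) (a b : I -> M) : nat := dimF a - dimF b.

Definition indep (A B C : M -> Prop) : Prop :=
  forall s : seq M, subset (inlist s) A ->
    dimS (inlist s) (setU B C) = dimS (inlist s) B.

Definition pregeometry (cl : (M -> Prop) -> M -> Prop) : Prop :=
  [/\ forall A, subset A (cl A),
      forall A B, subset A B -> subset (cl A) (cl B),
      forall A, subset (cl (cl A)) (cl A),
      forall A x, cl A x ->
        exists s : seq M, subset (inlist s) A /\ cl (inlist s) x
    & forall A x y, cl (fun z => A z \/ z = y) x -> ~ cl A x ->
        cl (fun z => A z \/ z = x) y].

Definition closed (cl : (M -> Prop) -> M -> Prop) (A : M -> Prop) : Prop :=
  subset (cl A) A.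

Record QPS (cl : (M -> Prop) -> M -> Prop) : Prop := {
  qps_countable_language : countableT (fsym L) /\ countableT (rsym L);
  qps_pregeometry : pregeometry cl;
  qps_qf_determined : forall k (b b' : 'I_k -> M) (x x' : M),
    qftp_eq (extf b x) (extf b' x') -> (cl (range b) x <-> cl (range b') x');
  qps_infinite_dim : forall s : seq M, exists x, ~ cl (inlist s) x;
  qps_countable_closure : forall s : seq M, countable_set (cl (inlist s));
  qps_unique_generic : forall (J : Type) (h h' : J -> M), countableT J ->
    closed cl (range h) -> closed cl (range h') -> qftp_eq h h' ->
    forall x x', ~ range h x -> ~ range h' x' -> qftp_eq (extf h x) (extf h' x');
  qps_homogeneity : forall (J : Type) (h h' : J -> M), countableT J ->
    (closed cl (range h) \/ forall y, ~ range h y) ->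
    (closed cl (range h') \/ forall y, ~ range h' y) ->
    qftp_eq h h' ->
    forall k (b b' : 'I_k -> M), qftp_eq (catf h b) (catf h' b') ->
    forall x, cl (range (catf h b)) x ->
    exists x', qftp_eq (extf (catf h b) x) (extf (catf h' b') x') }.

(* a collection of subsets of powers of M; the set with index c is a subset
   of M^(car c), its elements being represented as lists of length car c *)
Record collection := Collection {
  cidx : Type;
  car : cidx -> nat;
  cset : cidx -> seq M -> Prop }.

Definition coll_wf (C : collection) : Prop :=
  forall (c : cidx C) l, cset c l -> size l = car c.

Section Spec.
Variable C : collection.

Definition spec (I : Type) (a b : I -> M) : Prop :=
  forall (c : cidx C) (ix : seq I), cset c (map a ix) -> cset c (map b ix).

Definition generic_in (c : cidx C) (l : seq M) : Prop :=
  cset c l /\ forall l', cset c l' -> dimL l' <= dimL l.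

Definition generic0 (I : Type) (a : I -> M) : Prop :=
  forall x : I -> M, dimF x <= dimF a.

Definition iso (I : Type) (a b : I -> M) : Prop := gtp_eq (@emptyset M) a b.

Variable cl : (M -> Prop) -> M -> Prop.

Inductive sreg : forall I : finType, (I -> M) -> (I -> M) -> Prop :=
| sreg_iso (I : finType) (a b : I -> M) : iso a b -> sreg a b
| sreg_gen (I : finType) (a b : I -> M) : spec a b -> generic0 a -> sreg a b
| sreg_cat (I J : finType) (a b : I -> M) (a' b' : J -> M) :
    indep (range a) (@emptyset M) (range a') -> sreg a b -> sreg a' b' ->
    spec (catf a a') (catf b b') -> sreg (catf a a') (catf b b').

Inductive sgood : forall I : finType, (I -> M) -> (I -> M) -> Prop :=
| sgood_sreg (I : finType) (a b : I -> M) : sreg a b -> sgood a b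
| sgood_ext (I J K : finType) (a1 a1' : I -> M) (a2 a2' : J -> M) (a3 a3' : K -> M) :
    sgood (catf a1 a2) (catf a1' a2') -> iso a1 a1' ->
    (forall k, cl (range a1) (a3 k)) ->
    spec (catf (catf a1 a2) a3) (catf (catf a1' a2') a3') ->
    sgood (catf (catf a1 a2) a3) (catf (catf a1' a2') a3').

Definition restr (K : Type) (a : K -> M) (X : K -> Prop) : {i | X i} -> M :=
  fun i => a (proj1_sig i).
Arguments restr {K} a X _.

Definition finite_set (K : Type) (X : K -> Prop) : Prop :=
  exists s : seq K, forall i, X i <-> List.In i s.

Definition indiscernible (I J K : Type) (a : I -> J -> M) (b : K -> M) : Prop :=
  forall p : I -> I, bijective p ->
    exists s, aut_over (range b) s /\ forall i j, s (a i j) = a (p i) j.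

Definition indep_family (I J K : Type) (a : I -> J -> M) (b : K -> M) : Prop :=
  forall i, indep (range (a i)) (range b)
                  (fun x => exists i' j, i' <> i /\ a i' j = x).

Definition famcat (I J K : Type) (b : K -> M) (a : I -> J -> M) : K + (I * J) -> M :=
  catf b (fun p => a p.1 p.2).

Record zariski_like : Prop := {
  zl_qps : QPS cl;
  zl_wf : coll_wf C;
  zl_countable : countableT (cidx C);
  zl_1 : forall (c : cidx C) (s : M -> M) (l : seq M), is_aut s -> (cset c l <-> cset c (map s l));
  zl_2 : forall l : seq M, exists c : cidx C, generic_in c l;
  zl_3 : forall (c : cidx C) l1 l2, generic_in c l1 -> generic_in c l2 ->
    exists s, is_aut s /\ map s l1 = l2;
  zl_4 : forall (c d : cidx C) l, generic_in c l -> cset d l -> subset (cset c) (cset d);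
  zl_5 : forall (c1 c2 : cidx C) (a b a' b' : seq M), size a' = size a ->
    generic_in c1 (a ++ b) -> generic_in c2 a -> cset c1 (a' ++ b') ->
    cset c2 a';
  zl_6 : forall (c : cidx C) (p : 'I_(car c) -> 'I_(car c)), bijective p ->
    exists d : cidx C, car d = car c /\
      forall x : 'I_(car c) -> M, cset d (tup x) <-> cset c (tup (x \o p));
  zl_7 : forall (I J K : finType) (a a' : I -> M) (b b' : J -> M) (c c' : K -> M),
    sgood a a' -> rk a a' <= 1 ->
    spec (catf a b) (catf a' b') -> spec (catf a c) (catf a' c') ->
    exists bs : J -> M,
      [/\ indep (range bs) (range a) (range c),
          gtp_eq (range a) b bs
        & spec (catf (catf a bs) c) (catf (catf a' b') c')];
  zl_8 : forall (I : Type) (J K : finType) (a a' : I -> J -> M) (b b' : K -> M),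
    indep_family a b -> indiscernible a b -> indiscernible a' b' ->
    (forall i, spec (catf (a i) b) (catf (a' i) b')) ->
    sgood b b' -> rk b b' <= 1 ->
    spec (famcat b a) (famcat b' a');
  zl_9 : forall (K : Type) (k0 k1 : K) (a b : K -> M) (S : (K -> Prop) -> Prop),
    spec a b -> a k0 <> a k1 -> b k0 = b k1 ->
    (forall X, S X -> finite_set X) ->
    (forall X, finite_set X -> exists Y, S Y /\ subset X Y) ->
    (forall X Y, S X -> S Y -> exists Z, [/\ S Z, subset X Z & subset Y Z]) ->
    (forall X, S X -> X k0 /\ X k1) ->
    (forall X Y, S X -> S Y -> subset X Y ->
       forall c : K -> M, c k0 = c k1 ->
         spec (restr a Y) (restr c Y) -> spec (restr c Y) (restr b Y) ->
         rk (restr a Y) (restr c Y) <= 1 ->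
         rk (restr a X) (restr c X) <= 1) ->
    exists c : K -> M,
      [/\ spec a c, spec c b, c k0 = c k1
        & forall X, S X -> rk (restr a X) (restr c X) <= 1] }.

End Spec.
End Structures.

From Pilot Require Import Defs.
From mathcomp Require Import all_boot.
From Stdlib Require Import FunctionalExtensionality PropExtensionality.

(* For a finite index set K, apply axiom (9) to the family S = {K}: it is
   unbounded and directed, and its coherence hypothesis is vacuous because the
   only pair X <= Y in S has X = Y. *)

Lemma inlist_in (T : eqType) (x : T) (s : seq T) : List.In x s <-> x \in s.
Proof.
elim: s => [|y s IH] //=; rewrite in_cons; split.
- by case=> [->|/IH ->]; rewrite ?eqxx ?orbT.
- by case/orP=> [/eqP ->|/IH]; [left|right].
Qed.

Lemma finite_setT (K : finType) : finite_set (fun _ : K => True).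
Proof. by exists (enum K) => i; split=> // _; apply/inlist_in; rewrite mem_enum. Qed.

Section FullRestriction.
Variables (L : signature) (M : structure L).

Lemma range_restrT (K : Type) (a : K -> M) :
  range (@restr L M K a (fun _ => True)) = range a.
Proof.
apply: functional_extensionality => x; apply: propositional_extensionality.
split.
- by case=> [[i Hi] <-]; exists i.
- by case=> i <-; exists (exist (fun _ => True) i I).
Qed.

Lemma rk_restrT (K : Type) (a c : K -> M) :
  rk (@restr L M K a (fun _ => True)) (@restr L M K c (fun _ => True)) = rk a c.
Proof. by rewrite /rk /dimF !range_restrT. Qed.

End FullRestriction.

Lemma zariski_like_merge_rank1 (L : signature) (M : structure L)
    (C : collection M) (cl : (M -> Prop) -> M -> Prop)
    (HZ : zariski_like C cl) (K : finType) (k0 k1 : K) (a b : K -> M) :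
  spec C a b -> a k0 <> a k1 -> b k0 = b k1 ->
  exists c : K -> M, [/\ spec C a c, spec C c b, rk a c <= 1 & c k0 = c k1].
Proof.
move=> Hab Ha Hb.
pose S (X : K -> Prop) := X = (fun _ => True).
have S_finite X : S X -> finite_set X by move->; exact: finite_setT.
have S_unbounded X : finite_set X -> exists Y, S Y /\ Defs.subset X Y.
  by move=> _; exists (fun _ => True).
have S_directed X Y :
    S X -> S Y -> exists Z, [/\ S Z, Defs.subset X Z & Defs.subset Y Z].
  by move=> -> ->; exists (fun _ => True).
have S_k01 X : S X -> X k0 /\ X k1 by move->.
case: (zl_9 HZ Hab Ha Hb S_finite S_unbounded S_directed S_k01).
  by move=> X Y -> ->.
move=> c [Hac Hcb Hc Hrk].
by exists c; split=> //; rewrite -rk_restrT; apply: Hrk.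
Qed.

Theorem lemma5p8 (L : signature) (M : structure L)
  (C : collection M) (cl : (M -> Prop) -> M -> Prop)
  (HZ : zariski_like C cl)
  (m : nat) (a b : 'I_m.+2 -> M) :
  spec C a b -> a ord0 <> a (inord 1) -> b ord0 = b (inord 1) ->
  exists c : 'I_m.+2 -> M,
    [/\ spec C a c, spec C c b, rk a c <= 1 & c ord0 = c (inord 1)].
Proof. exact: (@zariski_like_merge_rank1 L M C cl HZ _ ord0 (inord 1) a b). Qed.
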